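(* Let $(A\otimes V,\mu_{A\otimes V})$ be a weak crossed product with associated morphisms $\psi_V^A:V\otimes A\rightarrow A\otimes V$, $\sigma_V^A:V\otimes V\rightarrow A\otimes V$ and idempotent $\nabla_{A\otimes V}$. Let $\psi_A^V:A\otimes V\rightarrow V\otimes A$ satisfy $(V\otimes\mu_A)\circ(\psi_A^V\otimes A)\circ(A\otimes\psi_A^V)=\psi_A^V\circ(\mu_A\otimes V)$, and put $\nabla_{V\otimes A}=(V\otimes\mu_A)\circ((\psi_A^V\circ(\eta_A\otimes V))\otimes A)$. Suppose $\psi_V^A\circ\psi_A^V=\nabla_{A\otimes V}$ and $\psi_A^V\circ\psi_V^A=\nabla_{V\otimes A}$. Put $\sigma_A^V=\psi_A^V\circ\sigma_V^A:V\otimes V\rightarrow V\otimes A$ and $\mu_{V\otimes A}=(V\otimes\mu_A)\circ(\sigma_A^V\otimes\mu_A)\circ(V\otimes\psi_A^V\otimes A)$. Then $(V\otimes A,\mu_{V\otimes A})$ is a weak crossed product with associated morphisms $\psi_A^V,\sigma_A^V$, i.e. $\nabla_{V\otimes A}\circ\sigma_A^V=\sigma_A^V$, $(V\otimes\mu_A)\circ(\sigma_A^V\otimes A)\circ(V\otimes\psi_A^V)\circ(\psi_A^V\otimes V)=(V\otimes\mu_A)\circ(\psi_A^V\otimes A)\circ(A\otimes\sigma_A^V)$ (twisted condition), and $(V\otimes\mu_A)\circ(\sigma_A^V\otimes A)\circ(V\otimes\sigma_A^V)=(V\otimes\mu_A)\circ(\sigma_A^V\otimes A)\circ(V\otimes\psi_A^V)\circ(\sigma_A^V\otimes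 V)$ (cocycle condition); moreover $\mu_{V\otimes A}=\psi_A^V\circ\mu_{A\otimes V}\circ(\psi_V^A\otimes\psi_V^A)$. Furthermore, if $(A\otimes V,\mu_{A\otimes V})$ is a weak crossed product with preunit $\nu:K\rightarrow A\otimes V$, then $(V\otimes A,\mu_{V\otimes A})$ is a weak crossed product with preunit $\upsilon=\psi_A^V\circ\nu$, i.e., with $\beta_\upsilon=(V\otimes\mu_A)\circ(\upsilon\otimes A)$: $(V\otimes\mu_A)\circ(\sigma_A^V\otimes A)\circ(V\otimes\psi_A^V)\circ(\upsilon\otimes V)=\nabla_{V\otimes A}\circ(V\otimes\eta_A)$, $(V\otimes\mu_A)\circ(\sigma_A^V\otimes A)\circ(V\otimes\upsilon)=\nabla_{V\otimes A}\circ(V\otimes\eta_A)$, $(V\otimes\mu_A)\circ(\psi_A^V\otimes A)\circ(A\otimes\upsilon)=\beta_\upsilon$.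
   Context: $\mathcal C$ is a strict monoidal category with tensor product $\otimes$ and unit object $K$ in which every idempotent splits. We write $A\otimes f$ for $id_A\otimes f$. An algebra $A$ has unit $\eta_A$ and product $\mu_A$. Weak crossed products. Let $A$ be an algebra and $V$ an object, and let $\psi_V^A:V\otimes A\rightarrow A\otimes V$ satisfy $(\mu_A\otimes V)\circ(A\otimes\psi_V^A)\circ(\psi_V^A\otimes A)=\psi_V^A\circ(V\otimes\mu_A)$. Then $\nabla_{A\otimes V}=(\mu_A\otimes V)\circ(A\otimes\psi_V^A)\circ(A\otimes V\otimes\eta_A)$ is idempotent. Let $\sigma_V^A:V\otimes V\rightarrow A\otimes V$ with $\nabla_{A\otimes V}\circ\sigma_V^A=\sigma_V^A$. The twisted condition is $(\mu_A\otimes V)\circ(A\otimes\psi_V^A)\circ(\sigma_V^A\otimes A)=(\mu_A\otimes V)\circ(A\otimes\sigma_V^A)\circ(\psi_V^A\otimes V)\circ(V\otimes\psi_V^A)$ and the cocycle condition is $(\mu_A\otimes V)\circ(A\otimes\sigma_V^A)\circ(\sigma_V^A\otimes V)=(\mu_A\otimes V)\circ(A\otimes\sigma_V^A)\circ(\psi_V^A\otimes V)\circ(V\otimes\sigma_V^A)$. With $\mu_{A\otimes V}=(\mu_A\otimes V)\circ(\mu_A\otimes\sigma_V^A)\circ(A\otimes\psi_V^A\otimes V)$, if the twisted and cocycle conditions hold $(A\otimes V,\mu_{A\otimes V})$ is called a weak crossed product (with associated morphisms $\psi_V^A,\sigma_V^A$ and idempotent $\nabla_{A\otimes V}$). For $\nu:K\rightarrow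 A\otimes V$ let $\beta_\nu=(\mu_A\otimes V)\circ(A\otimes\nu)$; a weak crossed product with preunit $\nu$ is one with $(\mu_A\otimes V)\circ(A\otimes\sigma_V^A)\circ(\psi_V^A\otimes V)\circ(V\otimes\nu)=\nabla_{A\otimes V}\circ(\eta_A\otimes V)$, $(\mu_A\otimes V)\circ(A\otimes\sigma_V^A)\circ(\nu\otimes V)=\nabla_{A\otimes V}\circ(\eta_A\otimes V)$ and $(\mu_A\otimes V)\circ(A\otimes\psi_V^A)\circ(\nu\otimes A)=\beta_\nu$. *)

From mathcomp Require Import ssreflect ssrfun ssrbool eqtype ssrnat seq.

Set Implicit Arguments.
Unset Strict Implicit.
Unset Printing Implicit Defensive.

(* Strict monoidal categories, presented with objects the words (lists) over a
   type of letters, the tensor product of objects being concatenation and the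
   unit object K being the empty word [::].  Every strict monoidal category C
   gives such a structure (letters = objects of C, hom u v = C(⊗u, ⊗v)), and the
   statement only involves letters A, V. *)

Definition hcast (X : Type) (H : seq X -> seq X -> Type) (u u' v v' : seq X)
  (e1 : u = u') (e2 : v = v') (f : H u v) : H u' v' :=
  match e1 in _ = a return H a v' with
  | erefl => match e2 in _ = b return H u b with erefl => f end
  end.

Record SMC := {
  ob : Type;
  hom : seq ob -> seq ob -> Type;
  comp : forall u v w, hom v w -> hom u v -> hom u w;
  idm : forall u, hom u u;
  tens : forall u v u' v', hom u v -> hom u' v' -> hom (u ++ u') (v ++ v');
  comp_assoc : forall u v w x (h : hom w x) (g : hom v w) (f : hom u v),
      comp h (comp g f) = comp (comp h g) f;
  comp_idl : forall u v (f : hom u v), comp (idm v) f = f;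
  comp_idr : forall u v (f : hom u v), comp f (idm u) = f;
  tens_comp : forall u v w u' v' w' (g : hom v w) (f : hom u v)
      (g' : hom v' w') (f' : hom u' v'),
      tens (comp g f) (comp g' f') = comp (tens g g') (tens f f');
  tens_id : forall u u', tens (idm u) (idm u') = idm (u ++ u');
  tens_assoc : forall u v u' v' u'' v'' (f : hom u v) (g : hom u' v')
      (h : hom u'' v''),
      tens (tens f g) h =
      @hcast ob hom _ _ _ _ (catA u u' u'') (catA v v' v'') (tens f (tens g h));
  tens_unitl : forall u v (f : hom u v), tens (idm [::]) f = f;
  tens_unitr : forall u v (f : hom u v),
      tens f (idm [::]) =
      @hcast ob hom _ _ _ _ (esym (cats0 u)) (esym (cats0 v)) f
}.

Arguments comp {s u v w}.
Arguments idm {s}.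
Arguments tens {s u v u' v'}.

Declare Scope smc_scope.
Delimit Scope smc_scope with smc.
Open Scope smc_scope.
Notation "g ∘ f" := (comp g f) (at level 40, left associativity) : smc_scope.
Notation "f ⊗ g" := (tens f g) (at level 38, left associativity) : smc_scope.
Notation "1[ x ]" := (idm [:: x]) (at level 0, format "1[ x ]") : smc_scope.

Section Defs.
Variable C : SMC.

Definition idempotents_split : Prop :=
  forall (u : seq (ob C)) (e : hom u u), e ∘ e = e ->
  exists (w : seq (ob C)) (p : hom u w) (i : hom w u),
    p ∘ i = idm w /\ i ∘ p = e.

Variables (A V : ob C) (eta : hom [::] [:: A]) (mu : hom [:: A; A] [:: A]).

Definition is_algebra : Prop :=
  [/\ mu ∘ (mu ⊗ 1[A]) = mu ∘ (1[A] ⊗ mu),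
      mu ∘ (eta ⊗ 1[A]) = 1[A] & mu ∘ (1[A] ⊗ eta) = 1[A]].

Definition nablaAV (psi : hom [:: V; A] [:: A; V]) : hom [:: A; V] [:: A; V] :=
  (mu ⊗ 1[V]) ∘ (1[A] ⊗ psi) ∘ (1[A] ⊗ 1[V] ⊗ eta).

Definition weak_crossed_product_AV (psi : hom [:: V; A] [:: A; V])
  (sigma : hom [:: V; V] [:: A; V]) : Prop :=
  [/\ (mu ⊗ 1[V]) ∘ (1[A] ⊗ psi) ∘ (psi ⊗ 1[A]) = psi ∘ (1[V] ⊗ mu),
      nablaAV psi ∘ sigma = sigma,
      (mu ⊗ 1[V]) ∘ (1[A] ⊗ psi) ∘ (sigma ⊗ 1[A]) =
      (mu ⊗ 1[V]) ∘ (1[A] ⊗ sigma) ∘ (psi ⊗ 1[V]) ∘ (1[V] ⊗ psi) &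
      (mu ⊗ 1[V]) ∘ (1[A] ⊗ sigma) ∘ (sigma ⊗ 1[V]) =
      (mu ⊗ 1[V]) ∘ (1[A] ⊗ sigma) ∘ (psi ⊗ 1[V]) ∘ (1[V] ⊗ sigma)].

Definition muAV (psi : hom [:: V; A] [:: A; V]) (sigma : hom [:: V; V] [:: A; V]) :
  hom [:: A; V; A; V] [:: A; V] :=
  (mu ⊗ 1[V]) ∘ (mu ⊗ sigma) ∘ (1[A] ⊗ psi ⊗ 1[V]).

Definition betaAV (nu : hom [::] [:: A; V]) : hom [:: A] [:: A; V] :=
  (mu ⊗ 1[V]) ∘ (1[A] ⊗ nu).

Definition preunit_AV (psi : hom [:: V; A] [:: A; V])
  (sigma : hom [:: V; V] [:: A; V]) (nu : hom [::] [:: A; V]) : Prop :=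
  [/\ (mu ⊗ 1[V]) ∘ (1[A] ⊗ sigma) ∘ (psi ⊗ 1[V]) ∘ (1[V] ⊗ nu) =
        nablaAV psi ∘ (eta ⊗ 1[V]),
      (mu ⊗ 1[V]) ∘ (1[A] ⊗ sigma) ∘ (nu ⊗ 1[V]) = nablaAV psi ∘ (eta ⊗ 1[V]) &
      (mu ⊗ 1[V]) ∘ (1[A] ⊗ psi) ∘ (nu ⊗ 1[A]) = betaAV nu].

Definition nablaVA (psi' : hom [:: A; V] [:: V; A]) : hom [:: V; A] [:: V; A] :=
  (1[V] ⊗ mu) ∘ ((psi' ∘ (eta ⊗ 1[V])) ⊗ 1[A]).

Definition muVA (sigma' : hom [:: V; V] [:: V; A])
  (psi' : hom [:: A; V] [:: V; A]) : hom [:: V; A; V; A] [:: V; A] :=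
  (1[V] ⊗ mu) ∘ (sigma' ⊗ mu) ∘ (1[V] ⊗ psi' ⊗ 1[A]).

Definition betaVA (ups : hom [::] [:: V; A]) : hom [:: A] [:: V; A] :=
  (1[V] ⊗ mu) ∘ (ups ⊗ 1[A]).

End Defs.

From mathcomp Require Import ssreflect ssrfun ssrbool eqtype ssrnat seq.
From Stdlib Require Import Eqdep.

(* Everything is transported along psi'.  The compatibility of psi' with mu
   and the relations psi ∘ psi' = nablaAV, psi' ∘ psi = nablaVA give
   psi' ∘ (mu ⊗ V) ∘ (A ⊗ psi) = (V ⊗ mu) ∘ (psi' ⊗ A) and its mirror image;
   together with the absorption of the idempotents (nablaVA ∘ psi' = psi',
   psi' ∘ nablaAV = psi', and nablaAV being absorbed into the sigma-action
   (mu ⊗ V) ∘ (A ⊗ sigma) on either side), each axiom of the V ⊗ A side is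
   psi' composed with the corresponding axiom of the A ⊗ V side. *)

Lemma hcast_id (X : Type) (H : seq X -> seq X -> Type) (u v : seq X)
  (e1 : u = u) (e2 : v = v) (f : H u v) : @hcast X H u u v v e1 e2 f = f.
Proof. by rewrite (UIP_refl _ _ e1) (UIP_refl _ _ e2). Qed.

Section MonoidalCalculus.
Context {C : SMC}.

Lemma comp_tensl x {u v w : seq (ob C)} (f : hom v w) (g : hom u v) :
  (f ⊗ idm x) ∘ (g ⊗ idm x) = (f ∘ g) ⊗ idm x.
Proof. by rewrite -tens_comp comp_idl. Qed.

Lemma comp_tensr x {u v w : seq (ob C)} (f : hom v w) (g : hom u v) :
  (idm x ⊗ f) ∘ (idm x ⊗ g) = idm x ⊗ (f ∘ g).
Proof. by rewrite -tens_comp comp_idl. Qed.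

Lemma comp_tensl_ctx x {u v w y : seq (ob C)} (f : hom v w) (g : hom u v)
  {X : hom (w ++ x) y} : X ∘ (f ⊗ idm x) ∘ (g ⊗ idm x) = X ∘ ((f ∘ g) ⊗ idm x).
Proof. by rewrite -comp_assoc comp_tensl. Qed.

Lemma comp_tensr_ctx x {u v w y : seq (ob C)} (f : hom v w) (g : hom u v)
  {X : hom (x ++ w) y} : X ∘ (idm x ⊗ f) ∘ (idm x ⊗ g) = X ∘ (idm x ⊗ (f ∘ g)).
Proof. by rewrite -comp_assoc comp_tensr. Qed.

Lemma tens_factorl {u v u' v' : seq (ob C)} (f : hom u v) (g : hom u' v') :
  (f ⊗ idm v') ∘ (idm u ⊗ g) = f ⊗ g.
Proof. by rewrite -tens_comp comp_idl comp_idr. Qed.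

Lemma tens_factorr {u v u' v' : seq (ob C)} (f : hom u v) (g : hom u' v') :
  (idm v ⊗ g) ∘ (f ⊗ idm u') = f ⊗ g.
Proof. by rewrite -tens_comp comp_idl comp_idr. Qed.

Lemma tens_interchange {u v u' v' : seq (ob C)} (f : hom u v) (g : hom u' v') :
  (f ⊗ idm v') ∘ (idm u ⊗ g) = (idm v ⊗ g) ∘ (f ⊗ idm u').
Proof. by rewrite tens_factorl tens_factorr. Qed.

Lemma tens_assocV {u v u' v' u'' v'' : seq (ob C)} (f : hom u v) (g : hom u' v')
  (h : hom u'' v'') :
  f ⊗ (g ⊗ h) =
  @hcast (ob C) (@hom C) _ _ _ _ (esym (catA u u' u'')) (esym (catA v v' v''))
    ((f ⊗ g) ⊗ h).
Proof. by rewrite tens_assoc; case: _ / (catA u u' u''); case: _ / (catA v v' v''). Qed.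

Lemma tens_point_slidel {v u' v' : seq (ob C)} (f : hom [::] v) (g : hom u' v') :
  (f ⊗ idm v') ∘ g = (idm v ⊗ g) ∘ (f ⊗ idm u').
Proof.
rewrite tens_factorr; have := tens_comp f (idm [::]) (idm v') g.
by rewrite comp_idr comp_idl tens_unitl => ->.
Qed.

(* For a concrete word u the cast is the identity ([hcast_id]). *)
Lemma tens_point_slider {u v v' : seq (ob C)} (f : hom u v) (g : hom [::] v') :
  (f ⊗ idm v') ∘ (idm u ⊗ g) =
  (idm v ⊗ g) ∘ @hcast (ob C) (@hom C) _ _ _ _ (esym (cats0 u)) (esym (cats0 v)) f.
Proof. by rewrite -tens_unitr -!tens_comp !comp_idl !comp_idr. Qed.

(* Composites are left-nested, so an equation between an inner segment of a
   chain only applies after reassociation; these lemmas do it in one step. *)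
Lemma comp_congr2 {u v w : seq (ob C)} {b : hom v w} {c : hom u v} {e : hom u w}
  (H : b ∘ c = e) {z} (X : hom w z) : X ∘ b ∘ c = X ∘ e.
Proof. by rewrite -H comp_assoc. Qed.

Lemma comp_congr3 {u v w t : seq (ob C)} {a : hom w t} {b : hom v w} {c : hom u v}
  {e : hom u t} (H : a ∘ b ∘ c = e) {z} (X : hom t z) : X ∘ a ∘ b ∘ c = X ∘ e.
Proof. by rewrite -H !comp_assoc. Qed.

Lemma comp_congr4 {u v w t s : seq (ob C)} {d : hom t s} {a : hom w t} {b : hom v w}
  {c : hom u v} {e : hom u s} (H : d ∘ a ∘ b ∘ c = e) {z} (X : hom s z) :
  X ∘ d ∘ a ∘ b ∘ c = X ∘ e.
Proof. by rewrite -H !comp_assoc. Qed.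

End MonoidalCalculus.

Ltac comp_rw_ H :=
  first [ rewrite (comp_congr4 H) | rewrite (comp_congr3 H)
        | rewrite (comp_congr2 H) | rewrite H ];
  rewrite ?comp_assoc.
Tactic Notation "comp_rw" uconstr(H) := comp_rw_ H.

Section TransportAlongPsi'.
Variable C : SMC.
Variables (A V : ob C) (eta : hom [::] [:: A]) (mu : hom [:: A; A] [:: A]).
Hypothesis mulA : mu ∘ (mu ⊗ 1[A]) = mu ∘ (1[A] ⊗ mu).
Hypothesis mul1 : mu ∘ (eta ⊗ 1[A]) = 1[A].
Hypothesis mulr1 : mu ∘ (1[A] ⊗ eta) = 1[A].
Variables (psi : hom [:: V; A] [:: A; V]) (sigma : hom [:: V; V] [:: A; V]).
Hypothesis psi_mul :
  (mu ⊗ 1[V]) ∘ (1[A] ⊗ psi) ∘ (psi ⊗ 1[A]) = psi ∘ (1[V] ⊗ mu).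
Hypothesis nablaAV_sigma : nablaAV eta mu psi ∘ sigma = sigma.
Hypothesis twistedAV : (mu ⊗ 1[V]) ∘ (1[A] ⊗ psi) ∘ (sigma ⊗ 1[A]) =
  (mu ⊗ 1[V]) ∘ (1[A] ⊗ sigma) ∘ (psi ⊗ 1[V]) ∘ (1[V] ⊗ psi).
Hypothesis cocycleAV : (mu ⊗ 1[V]) ∘ (1[A] ⊗ sigma) ∘ (sigma ⊗ 1[V]) =
  (mu ⊗ 1[V]) ∘ (1[A] ⊗ sigma) ∘ (psi ⊗ 1[V]) ∘ (1[V] ⊗ sigma).
Variable psi' : hom [:: A; V] [:: V; A].
Hypothesis psi'_mul :
  (1[V] ⊗ mu) ∘ (psi' ⊗ 1[A]) ∘ (1[A] ⊗ psi') = psi' ∘ (mu ⊗ 1[V]).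
Hypothesis psi_psi' : psi ∘ psi' = nablaAV eta mu psi.
Hypothesis psi'_psi : psi' ∘ psi = nablaVA eta mu psi'.

Lemma nablaVA_psi' : nablaVA eta mu psi' ∘ psi' = psi'.
Proof.
rewrite /nablaVA -comp_tensl !comp_assoc.
rewrite (tens_assoc eta 1[V] 1[A]) hcast_id tens_id.
comp_rw (tens_point_slidel eta psi').
rewrite psi'_mul -(tens_id [:: A] [:: V]) -comp_assoc.
rewrite [eta ⊗ (1[A] ⊗ 1[V])]tens_assocV hcast_id.
by rewrite (comp_tensl [:: V] mu (eta ⊗ 1[A])) mul1 tens_id comp_idr.
Qed.

Lemma psi'_nablaAV : psi' ∘ nablaAV eta mu psi = psi'.
Proof. by rewrite -psi_psi' comp_assoc psi'_psi nablaVA_psi'. Qed.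

Lemma nablaAV_unit : nablaAV eta mu psi ∘ (eta ⊗ 1[V]) = psi ∘ (1[V] ⊗ eta).
Proof.
rewrite /nablaAV (tens_assoc 1[A] 1[V] eta) hcast_id.
have slide_unit : (1[A] ⊗ (1[V] ⊗ eta)) ∘ (eta ⊗ 1[V]) =
                  (eta ⊗ idm [:: V; A]) ∘ (1[V] ⊗ eta).
  by rewrite tens_factorr -(tens_factorl eta (1[V] ⊗ eta)) tens_unitl.
comp_rw slide_unit.
have slide_psi : (1[A] ⊗ psi) ∘ (eta ⊗ idm [:: V; A]) = (eta ⊗ idm [:: A; V]) ∘ psi.
  by rewrite tens_factorr -(tens_factorl eta psi) tens_unitl.
comp_rw slide_psi.
rewrite -(tens_id [:: A] [:: V]) (tens_assocV eta 1[A] 1[V]) hcast_id.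
by rewrite (comp_tensl [:: V] mu (eta ⊗ 1[A])) mul1 tens_id comp_idl.
Qed.

Lemma nablaVA_unit : nablaVA eta mu psi' ∘ (1[V] ⊗ eta) = psi' ∘ (eta ⊗ 1[V]).
Proof.
rewrite /nablaVA -comp_assoc (tens_point_slider (psi' ∘ (eta ⊗ 1[V])) eta).
rewrite hcast_id comp_assoc.
rewrite -(tens_id [:: V] [:: A]) (tens_assoc 1[V] 1[A] eta) hcast_id.
by rewrite (comp_tensr [:: V]) mulr1 tens_id comp_idl.
Qed.

(* psi' ∘ (mu ⊗ V) is rewritten with psi'_mul; the resulting psi' ∘ psi is
   nablaVA, whose unit then cancels against mu. *)
Lemma psi'_mul_psi :
  psi' ∘ (mu ⊗ 1[V]) ∘ (1[A] ⊗ psi) = (1[V] ⊗ mu) ∘ (psi' ⊗ 1[A]).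
Proof.
comp_rw (esym psi'_mul).
comp_rw (comp_tensr [:: A] psi' psi).
rewrite psi'_psi /nablaVA -(comp_tensr [:: A]).
rewrite [1[A] ⊗ (1[V] ⊗ mu)]tens_assocV hcast_id tens_id !comp_assoc.
comp_rw (tens_interchange psi' mu).
rewrite -(tens_id [:: V] [:: A]) (tens_assoc 1[V] 1[A] mu) hcast_id.
comp_rw (comp_tensr [:: V] mu (1[A] ⊗ mu)).
rewrite -mulA -comp_tensr [1[V] ⊗ (mu ⊗ 1[A])]tens_assocV hcast_id.
rewrite -(tens_id [:: A] [:: A]) [psi' ⊗ (1[A] ⊗ 1[A])]tens_assocV hcast_id.
comp_rw (comp_tensl [:: A] (1[V] ⊗ mu) (psi' ⊗ 1[A])).
rewrite [1[A] ⊗ ((psi' ∘ eta ⊗ 1[V]) ⊗ 1[A])]tens_assocV hcast_id.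
comp_rw (comp_tensl [:: A] ((1[V] ⊗ mu) ∘ (psi' ⊗ 1[A]))
                             (1[A] ⊗ (psi' ∘ (eta ⊗ 1[V])))).
rewrite -comp_tensr !comp_assoc psi'_mul.
rewrite [1[A] ⊗ (eta ⊗ 1[V])]tens_assocV hcast_id.
comp_rw (comp_tensl [:: V] mu (1[A] ⊗ eta)).
by rewrite mulr1 tens_id comp_idr.
Qed.

Lemma psi_mul_psi' :
  psi ∘ (1[V] ⊗ mu) ∘ (psi' ⊗ 1[A]) = (mu ⊗ 1[V]) ∘ (1[A] ⊗ psi).
Proof.
rewrite -psi_mul.
comp_rw (comp_tensl [:: A] psi psi').
rewrite psi_psi' /nablaAV -!comp_tensl !comp_assoc.
rewrite (tens_assoc mu 1[V] 1[A]) hcast_id tens_id.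
comp_rw (tens_factorr mu psi).
rewrite -(tens_factorl mu psi) !comp_assoc.
rewrite -(tens_id [:: A] [:: V]) [mu ⊗ (1[A] ⊗ 1[V])]tens_assocV hcast_id.
comp_rw (comp_tensl [:: V] mu (mu ⊗ 1[A])).
rewrite mulA -comp_tensl ?comp_assoc.
rewrite (tens_assoc 1[A] mu 1[V]) hcast_id.
rewrite -(tens_id [:: A] [:: A]) (tens_assoc 1[A] 1[A] psi) hcast_id.
rewrite (tens_assoc 1[A] psi 1[A]) hcast_id.
rewrite (tens_assoc (1[A] ⊗ 1[V]) eta 1[A]) hcast_id.
rewrite (tens_assoc 1[A] 1[V] (eta ⊗ 1[A])) hcast_id.
rewrite ?comp_assoc -!(comp_assoc (mu ⊗ 1[V])) !(comp_tensr [:: A]) psi_mul.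
by rewrite -(comp_assoc psi) (comp_tensr [:: V]) mul1 tens_id comp_idr.
Qed.

(* Both sides of the twisted condition absorb nablaAV on the right
   (psi_mul on the left, nablaAV_sigma on the right). *)
Lemma sigma_action_psi_nablaAV :
  (mu ⊗ 1[V]) ∘ (1[A] ⊗ sigma) ∘ (psi ⊗ 1[V]) ∘ (1[V] ⊗ nablaAV eta mu psi) =
  (mu ⊗ 1[V]) ∘ (1[A] ⊗ sigma) ∘ (psi ⊗ 1[V]).
Proof.
rewrite /nablaAV -!(comp_tensr [:: V]) !comp_assoc.
rewrite (tens_assocV 1[V] mu 1[V]) hcast_id.
comp_rw (comp_tensl [:: V] psi (1[V] ⊗ mu)).
rewrite -psi_mul -!comp_tensl !comp_assoc.
rewrite (tens_assoc mu 1[V] 1[V]) hcast_id tens_id.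
comp_rw (tens_factorr mu sigma).
rewrite -(tens_factorl mu sigma) !comp_assoc.
rewrite -(tens_id [:: A] [:: V]) (tens_assocV mu 1[A] 1[V]) hcast_id.
rewrite (comp_tensl [:: V] mu (mu ⊗ 1[A])) mulA -(comp_tensl [:: V] mu (1[A] ⊗ mu)).
rewrite (tens_assoc 1[A] mu 1[V]) hcast_id.
rewrite -(tens_id [:: A] [:: A]) (tens_assoc 1[A] 1[A] sigma) hcast_id.
rewrite (tens_assoc 1[A] psi 1[V]) hcast_id.
rewrite (tens_assoc 1[A] 1[V] eta) hcast_id (tens_assocV 1[V] 1[A] (1[V] ⊗ eta)) hcast_id.
rewrite (tens_assoc psi 1[A] 1[V]) hcast_id tens_id.
rewrite (tens_assocV 1[V] 1[A] psi) hcast_id tens_id.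
comp_rw (tens_interchange psi psi).
comp_rw (tens_interchange psi (1[V] ⊗ eta)).
rewrite -(tens_id [:: A] [:: V]) (tens_assoc 1[A] 1[V] psi) hcast_id.
rewrite (tens_assoc 1[A] 1[V] (1[V] ⊗ eta)) hcast_id.
rewrite !(comp_tensr_ctx [:: A]) !comp_assoc -twistedAV.
rewrite (tens_assocV 1[V] 1[V] eta) hcast_id tens_id.
rewrite -(comp_assoc _ (sigma ⊗ 1[A])) (tens_point_slider sigma eta) hcast_id.
have nabla_sigma := nablaAV_sigma; rewrite /nablaAV tens_id in nabla_sigma.
by rewrite !comp_assoc nabla_sigma.
Qed.

Lemma sigma_action_psi_unit :
  (mu ⊗ 1[V]) ∘ (1[A] ⊗ sigma) ∘ (psi ⊗ 1[V]) ∘ (1[V] ⊗ (eta ⊗ 1[V])) = sigma.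
Proof.
rewrite -sigma_action_psi_nablaAV (comp_tensr_ctx [:: V]) nablaAV_unit.
rewrite -(comp_tensr_ctx [:: V]) -twistedAV.
rewrite (tens_assocV 1[V] 1[V] eta) hcast_id tens_id.
rewrite -(comp_assoc _ (sigma ⊗ 1[A])) (tens_point_slider sigma eta) hcast_id.
have nabla_sigma := nablaAV_sigma; rewrite /nablaAV tens_id in nabla_sigma.
by rewrite !comp_assoc nabla_sigma.
Qed.

Lemma sigma_action_nablaAV :
  (mu ⊗ 1[V]) ∘ (1[A] ⊗ sigma) ∘ (nablaAV eta mu psi ⊗ 1[V]) =
  (mu ⊗ 1[V]) ∘ (1[A] ⊗ sigma).
Proof.
rewrite /nablaAV -!comp_tensl !comp_assoc.
rewrite (tens_assoc mu 1[V] 1[V]) hcast_id tens_id.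
comp_rw (tens_factorr mu sigma).
rewrite -(tens_factorl mu sigma) !comp_assoc.
rewrite -(tens_id [:: A] [:: V]) (tens_assocV mu 1[A] 1[V]) hcast_id.
rewrite (comp_tensl [:: V] mu (mu ⊗ 1[A])) mulA -(comp_tensl [:: V] mu (1[A] ⊗ mu)).
rewrite (tens_assoc 1[A] mu 1[V]) hcast_id.
rewrite -(tens_id [:: A] [:: A]) (tens_assoc 1[A] 1[A] sigma) hcast_id.
rewrite (tens_assoc 1[A] psi 1[V]) hcast_id.
rewrite (tens_assoc (1[A] ⊗ 1[V]) eta 1[V]) hcast_id.
rewrite (tens_assoc 1[A] 1[V] (eta ⊗ 1[V])) hcast_id.
by rewrite !(comp_tensr_ctx [:: A]) !comp_assoc sigma_action_psi_unit.
Qed.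

Lemma nablaVA_sigma' : nablaVA eta mu psi' ∘ (psi' ∘ sigma) = psi' ∘ sigma.
Proof. by rewrite comp_assoc nablaVA_psi'. Qed.

Lemma twistedVA :
  (1[V] ⊗ mu) ∘ ((psi' ∘ sigma) ⊗ 1[A]) ∘ (1[V] ⊗ psi') ∘ (psi' ⊗ 1[V]) =
  (1[V] ⊗ mu) ∘ (psi' ⊗ 1[A]) ∘ (1[A] ⊗ (psi' ∘ sigma)).
Proof.
rewrite -(comp_tensr [:: A]) !comp_assoc psi'_mul.
rewrite -(comp_tensl [:: A]) !comp_assoc -psi'_mul_psi.
comp_rw twistedAV.
rewrite (comp_tensr_ctx [:: V]) psi_psi'.
comp_rw sigma_action_psi_nablaAV.
rewrite (comp_tensl_ctx [:: V] psi psi') psi_psi'.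
by comp_rw sigma_action_nablaAV.
Qed.

Lemma cocycleVA :
  (1[V] ⊗ mu) ∘ ((psi' ∘ sigma) ⊗ 1[A]) ∘ (1[V] ⊗ (psi' ∘ sigma)) =
  (1[V] ⊗ mu) ∘ ((psi' ∘ sigma) ⊗ 1[A]) ∘ (1[V] ⊗ psi') ∘ ((psi' ∘ sigma) ⊗ 1[V]).
Proof.
have psi'_cocycleAV :
  (1[V] ⊗ mu) ∘ ((psi' ∘ sigma) ⊗ 1[A]) ∘ (1[V] ⊗ (psi' ∘ sigma)) =
  psi' ∘ (mu ⊗ 1[V]) ∘ (1[A] ⊗ sigma) ∘ (sigma ⊗ 1[V]).
  rewrite -(comp_tensl [:: A]) !comp_assoc -psi'_mul_psi.
  comp_rw twistedAV.
  rewrite -(comp_tensr [:: V]) !comp_assoc (comp_tensr_ctx [:: V] psi psi') psi_psi'.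
  rewrite (comp_tensr_ctx [:: V] (nablaAV eta mu psi) sigma) nablaAV_sigma.
  by comp_rw (esym cocycleAV).
rewrite psi'_cocycleAV -(comp_tensl [:: V] psi' sigma) !comp_assoc.
comp_rw twistedVA.
by rewrite -(comp_tensr [:: A]) !comp_assoc psi'_mul.
Qed.

Lemma muVA_conj : muVA mu (psi' ∘ sigma) psi' = psi' ∘ muAV mu psi sigma ∘ (psi ⊗ psi).
Proof.
rewrite /muVA /muAV.
transitivity ((1[V] ⊗ mu) ∘ (psi' ⊗ 1[A]) ∘ (sigma ⊗ 1[A]) ∘ (1[V] ⊗ (1[V] ⊗ mu))
   ∘ (1[V] ⊗ (psi' ⊗ 1[A]))).
  rewrite -(tens_factorl (psi' ∘ sigma) mu) -(comp_tensl [:: A]) !comp_assoc.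
  rewrite -(tens_id [:: V] [:: V]) (tens_assoc 1[V] 1[V] mu) hcast_id.
  by rewrite (tens_assoc 1[V] psi' 1[A]) hcast_id.
rewrite -(tens_factorl psi psi) -(tens_factorr mu sigma) !comp_assoc.
rewrite -(tens_id [:: V] [:: V]) (tens_assocV mu 1[V] 1[V]) hcast_id.
rewrite -(tens_id [:: A] [:: V]) (tens_assocV psi 1[A] 1[V]) hcast_id.
rewrite (comp_tensl_ctx [:: V] (mu ⊗ 1[V]) (1[A] ⊗ psi)).
rewrite (comp_tensl_ctx [:: V] ((mu ⊗ 1[V]) ∘ (1[A] ⊗ psi)) (psi ⊗ 1[A])) psi_mul.
rewrite -(comp_tensl [:: V] psi (1[V] ⊗ mu)) !comp_assoc.
rewrite (tens_assoc 1[V] mu 1[V]) hcast_id.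
rewrite -(tens_id [:: V] [:: A]) (tens_assoc 1[V] 1[A] psi) hcast_id.
rewrite (comp_tensr_ctx [:: V] (mu ⊗ 1[V]) (1[A] ⊗ psi)) -psi_mul_psi'.
rewrite -!(comp_tensr [:: V]) !comp_assoc.
comp_rw (esym twistedAV).
by rewrite psi'_mul_psi.
Qed.

Variable nu : hom [::] [:: A; V].
Hypothesis preunitAV_psi : (mu ⊗ 1[V]) ∘ (1[A] ⊗ sigma) ∘ (psi ⊗ 1[V]) ∘ (1[V] ⊗ nu) =
  nablaAV eta mu psi ∘ (eta ⊗ 1[V]).
Hypothesis preunitAV_sigma :
  (mu ⊗ 1[V]) ∘ (1[A] ⊗ sigma) ∘ (nu ⊗ 1[V]) = nablaAV eta mu psi ∘ (eta ⊗ 1[V]).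
Hypothesis preunitAV_beta : (mu ⊗ 1[V]) ∘ (1[A] ⊗ psi) ∘ (nu ⊗ 1[A]) = betaAV mu nu.

Lemma preunitVA_psi :
  (1[V] ⊗ mu) ∘ ((psi' ∘ sigma) ⊗ 1[A]) ∘ (1[V] ⊗ psi') ∘ ((psi' ∘ nu) ⊗ 1[V]) =
  nablaVA eta mu psi' ∘ (1[V] ⊗ eta).
Proof.
rewrite nablaVA_unit -(comp_tensl [:: V] psi' nu) !comp_assoc.
comp_rw twistedVA.
rewrite -(comp_tensr [:: A]) !comp_assoc psi'_mul.
comp_rw preunitAV_sigma.
by have := psi'_nablaAV; rewrite /nablaAV !comp_assoc => ->.
Qed.

Lemma preunitVA_sigma :
  (1[V] ⊗ mu) ∘ ((psi' ∘ sigma) ⊗ 1[A]) ∘ (1[V] ⊗ (psi' ∘ nu)) =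
  nablaVA eta mu psi' ∘ (1[V] ⊗ eta).
Proof.
rewrite nablaVA_unit -(comp_tensl [:: A]) !comp_assoc -psi'_mul_psi.
comp_rw twistedAV.
rewrite -(comp_tensr [:: V]) !comp_assoc (comp_tensr_ctx [:: V] psi psi') psi_psi'.
comp_rw sigma_action_psi_nablaAV.
comp_rw preunitAV_psi.
by have := psi'_nablaAV; rewrite /nablaAV !comp_assoc => ->.
Qed.

Lemma preunitVA_beta :
  (1[V] ⊗ mu) ∘ (psi' ⊗ 1[A]) ∘ (1[A] ⊗ (psi' ∘ nu)) = betaVA mu (psi' ∘ nu).
Proof.
rewrite -(comp_tensr [:: A]) !comp_assoc psi'_mul -comp_assoc.
rewrite -/(betaAV mu nu) -preunitAV_beta !comp_assoc psi'_mul_psi -comp_assoc.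
by rewrite (comp_tensl [:: A] psi' nu).
Qed.

End TransportAlongPsi'.

Theorem proposition1p10 (C : SMC) (Hsplit : idempotents_split C)
  (A V : ob C) (eta : hom [::] [:: A]) (mu : hom [:: A; A] [:: A])
  (Halg : is_algebra eta mu)
  (psi : hom [:: V; A] [:: A; V]) (sigma : hom [:: V; V] [:: A; V])
  (Hwcp : weak_crossed_product_AV eta mu psi sigma)
  (psi' : hom [:: A; V] [:: V; A])
  (Hpsi' : (1[V] ⊗ mu) ∘ (psi' ⊗ 1[A]) ∘ (1[A] ⊗ psi') = psi' ∘ (mu ⊗ 1[V]))
  (H1 : psi ∘ psi' = nablaAV eta mu psi)
  (H2 : psi' ∘ psi = nablaVA eta mu psi') :
  let sigma' := psi' ∘ sigma in
  [/\ nablaVA eta mu psi' ∘ sigma' = sigma',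
      (* twisted condition *)
      (1[V] ⊗ mu) ∘ (sigma' ⊗ 1[A]) ∘ (1[V] ⊗ psi') ∘ (psi' ⊗ 1[V]) =
      (1[V] ⊗ mu) ∘ (psi' ⊗ 1[A]) ∘ (1[A] ⊗ sigma'),
      (* cocycle condition *)
      (1[V] ⊗ mu) ∘ (sigma' ⊗ 1[A]) ∘ (1[V] ⊗ sigma') =
      (1[V] ⊗ mu) ∘ (sigma' ⊗ 1[A]) ∘ (1[V] ⊗ psi') ∘ (sigma' ⊗ 1[V]),
      muVA mu sigma' psi' = psi' ∘ muAV mu psi sigma ∘ (psi ⊗ psi) &
      (* preunit part *)
      forall nu : hom [::] [:: A; V],
        preunit_AV eta mu psi sigma nu ->
        let ups := psi' ∘ nu in
        [/\ (1[V] ⊗ mu) ∘ (sigma' ⊗ 1[A]) ∘ (1[V] ⊗ psi') ∘ (ups ⊗ 1[V]) =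
              nablaVA eta mu psi' ∘ (1[V] ⊗ eta),
            (1[V] ⊗ mu) ∘ (sigma' ⊗ 1[A]) ∘ (1[V] ⊗ ups) =
              nablaVA eta mu psi' ∘ (1[V] ⊗ eta) &
            (1[V] ⊗ mu) ∘ (psi' ⊗ 1[A]) ∘ (1[A] ⊗ ups) = betaVA mu ups]].
Proof.
(* The splitting of idempotents is a standing assumption of the paper that
   this argument does not use. *)
case: Halg => mulA mul1 mulr1; case: Hwcp => psi_mul nablaAV_sigma twisted cocycle.
move=> sigma'; rewrite {}/sigma'; split.
- by eapply nablaVA_sigma'; eassumption.
- by eapply twistedVA; eassumption.
- by eapply cocycleVA; eassumption.
- by eapply muVA_conj; eassumption.
- move=> nu [pre_psi pre_sigma pre_beta]; split.
  + by eapply preunitVA_psi; eassumption.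
  + by eapply preunitVA_sigma; eassumption.
  + by eapply preunitVA_beta; eassumption.
Qed.
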